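(* Let $k$ be a positive integer, let $D$ be a digraph containing no subdivision of $B(k,1;k)$, let $\mathcal{C}$ be a $k$-suitable collection of directed cycles of $D$, and let $C_1\in\mathcal{C}$. Then (i) $I^+(C_1)$ and $I^-(C_1)$ are vertex-disjoint; and (ii) for every $C_j\in\mathcal{C}\cap C_1$, $V(I^-(C_1))\cap V(C_j)=V(Q^-_j)$ and $V(I^+(C_1))\cap V(C_j)=V(Q^+_j)$.
   Context: A collection $\mathcal{C}$ of directed cycles is $k$-suitable if every cycle of $\mathcal{C}$ has length at least $8k$ and for any two distinct $C_i,C_j\in\mathcal{C}$, the set $V(C_i)\cap V(C_j)$ is either empty or the vertex set of a directed path $P_{i,j}$ with at most $k$ vertices which is a subpath of both $C_i$ and $C_j$; $s_{i,j}$, $t_{i,j}$ denote the initial and terminal vertices of $P_{i,j}$. For a directed cycle $C$ and vertices $a,b$ on it, $C[a,b]$ is the directed subpath of $C$ from $a$ to $b$, and $C[a,b[$, $C]a,b]$ denote it with $b$, respectively $a$, removed. $\mathcal{C}\cap C_1$ denotes the set of cycles of $\mathcal{C}$ other than $C_1$ that share a vertex with $C_1$. For $C_j\in\mathcal{C}\cap C_1$, $Q_j$ is the subpath of $C_j$ consisting of all vertices at distance at most $3k$ from $P_{1,j}$ along the cycle, so that $C_j[s(Q_j),s_{1,j}]$ and $C_j[t_{1,j},t(Q_j)]$ both have length $3k$ ($s(Q_j),t(Q_j)$ being its initial and terminal vertices); $Q^-_j=C_j[s(Q_j),s_{1,j}[$ and $Q^+_j=C_j]t_{1,j},t(Q_j)]$.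 Finally $I^+(C_1)=\bigcup_{C_j\in\mathcal{C}\cap C_1}Q^+_j$, $I^-(C_1)=\bigcup_{C_j\in\mathcal{C}\cap C_1}Q^-_j$ and $I(C_1)=C_1\cup\bigcup_{C_j\in\mathcal{C}\cap C_1}Q_j$ (unions of digraphs). A digraph contains a subdivision of $B(k_1,k_2;k_3)$ if there exist distinct vertices $u,w$ and three pairwise internally vertex-disjoint directed paths: two from $u$ to $w$ of lengths at least $k_1$ and $k_2$, and one from $w$ to $u$ of length at least $k_3$. *)

From mathcomp Require Import all_boot.
Set Implicit Arguments. Unset Strict Implicit. Unset Printing Implicit Defensive.

Section Digraphs.
Variable V : finType.
Variable E : rel V.

(* A directed path given by its start vertex [u] and the list [p] of the
   remaining vertices: vertices u :: p, arcs between consecutive vertices,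
   no repeated vertex.  Its length (number of arcs) is [size p]. *)
Definition dpath (u w : V) (p : seq V) : bool :=
  [&& path E u p, uniq (u :: p) & last u p == w].

Definition internal (u : V) (p : seq V) : seq V := behead (belast u p).

Definition disj (s t : seq V) : bool := ~~ has (mem t) s.

Definition has_subdiv_B (k1 k2 k3 : nat) : Prop :=
  exists (u w : V) (p1 p2 p3 : seq V),
    [/\ u != w,
        [/\ dpath u w p1, dpath u w p2 & dpath w u p3],
        [/\ k1 <= size p1, k2 <= size p2 & k3 <= size p3],
        p1 != p2 &
        [/\ disj (internal u p1) (internal u p2),
            disj (internal u p1) (internal w p3) &
            disj (internal u p2) (internal w p3)]].

Definition dcycle (c : seq V) : bool := uniq c && cycle E c.

(* k-suitable collection: cycles C i (i : 'I_m), together with the paths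
   P i j = P_{i,j} (only constrained when C i and C j meet). *)
Definition k_suitable (k m : nat) (C : 'I_m -> seq V)
    (P : 'I_m -> 'I_m -> seq V) : Prop :=
  (forall i, dcycle (C i) /\ 8 * k <= size (C i)) /\
  (forall i j, i != j ->
     (forall v, v \in C i -> v \notin C j) \/
     [/\ P i j != [::], size (P i j) <= k,
         (forall v, (v \in P i j) = (v \in C i) && (v \in C j)),
         (exists r, prefix (P i j) (rot r (C i))) &
         (exists r, prefix (P i j) (rot r (C j)))]).

Definition meets (c d : seq V) : bool := has (mem c) d.

(* Q^-_j = C_j[s(Q_j), s_{1,j}[ : the 3k vertices preceding s_{1,j} on C_j *)
Definition Qminus (k : nat) (c p : seq V) : seq V :=
  match p with
  | [::] => [::]
  | s :: _ => [seq iter d (prev c) s | d <- iota 1 (3 * k)]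
  end.

(* Q^+_j = C_j]t_{1,j}, t(Q_j)] : the 3k vertices following t_{1,j} on C_j *)
Definition Qplus (k : nat) (c p : seq V) : seq V :=
  match p with
  | [::] => [::]
  | s :: p' => [seq iter d (next c) (last s p') | d <- iota 1 (3 * k)]
  end.

Definition inIminus (k m : nat) (C : 'I_m -> seq V)
    (P : 'I_m -> 'I_m -> seq V) (i1 : 'I_m) (v : V) : Prop :=
  exists j, [/\ j != i1, meets (C i1) (C j) & v \in Qminus k (C j) (P i1 j)].

Definition inIplus (k m : nat) (C : 'I_m -> seq V)
    (P : 'I_m -> 'I_m -> seq V) (i1 : 'I_m) (v : V) : Prop :=
  exists j, [/\ j != i1, meets (C i1) (C j) & v \in Qplus k (C j) (P i1 j)].

End Digraphs.

From mathcomp Require Import all_boot zify.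
Set Implicit Arguments. Unset Strict Implicit. Unset Printing Implicit Defensive.

(* Both parts reduce to one claim: a vertex v of Q^-_l lying on another cycle C_j that
   meets C_1 belongs to Q^-_j (for Q^+ reverse every arc; part (i) follows because Q^+_j
   and Q^-_j are disjoint on the long cycle C_j).  If v were not in Q^-_j, then v lies on
   P_{j,l}, and following C_l from v one leaves P_{j,l} at its end x before reaching
   s_{1,l}.  From x the cycle C_j runs on to s_{1,j} avoiding C_l, and C_1 continues to its
   first vertex y on C_l.  This x-y path has length at least k, and with the two arcs of
   C_l between x and y it forms a subdivision of B(k,1;k). *)

(* The sections below carry many non-arithmetic hypotheses, which slow [zify] down
   considerably. *)
Ltac nat_lia :=
  repeat match goal with
  | H : ?T |- _ =>
      match type of T with Prop =>
        lazymatch T with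
        | is_true (leq _ _) => fail
        | is_true (_ && _) => fail
        | @eq nat _ _ => fail
        | _ \/ _ => fail
        | _ /\ _ => fail
        | _ => clear H
        end
      end
  end; lia.

Lemma modn_eq_lt3 n i j : 0 < n -> i < 3 * n -> j < 3 * n -> i %% n = j %% n ->
  i = j \/ i = j + n \/ j = i + n \/ i = j + 2 * n \/ j = i + 2 * n.
Proof.
move=> n0 hi hj e.
have qi : i %/ n < 3 by rewrite ltn_divLR.
have qj : j %/ n < 3 by rewrite ltn_divLR.
move: (divn_eq i n) (divn_eq j n) (ltn_pmod i n0) (ltn_pmod j n0) e qi qj.
move: (i %% n) (j %% n) (i %/ n) (j %/ n) => a b p q ei ej ha hb e.
case: p ei => [|[|[|]]] // ei _; case: q ej => [|[|[|]]] // ej _; lia.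
Qed.

Section CyclicIndex.
Variables (V : finType) (x0 : V).
Implicit Types c P : seq V.

Definition cnth c i := nth x0 c (i %% size c).

Fixpoint carc c i d := if d is d'.+1 then cnth c i.+1 :: carc c i.+1 d' else [::].

Definition on_cycle_at c a P := forall t, t < size P -> nth x0 P t = cnth c (a + t).

Lemma on_cycle_at_rot c r P : 0 < size c -> prefix P (rot r c) ->
  exists2 a, a < size c & on_cycle_at c a P.
Proof.
move=> n0 /prefixP[s hs].
have sP : size P <= size c by rewrite -(size_rot r c) hs size_cat leq_addr.
have nthP t : t < size P -> nth x0 P t = nth x0 (rot r c) t.
  by move=> tP; rewrite hs nth_cat tP.
case: (ltnP r (size c)) => hr; last first.
  by exists 0 => // t tP; rewrite nthP // rot_oversize // /cnth add0n modn_small //; lia.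
exists r => // t tP; rewrite nthP // /rot nth_cat size_drop /cnth.
case: ifP => h; first by rewrite nth_drop modn_small //; lia.
rewrite nth_take; last lia.
have -> : r + t = (t - (size c - r)) + size c by lia.
by rewrite modnDr modn_small //; lia.
Qed.

Variable c : seq V.
Hypothesis Uc : uniq c.
Hypothesis n0 : 0 < size c.
Local Notation n := (size c).

Lemma cnth_addn i : cnth c (i + n) = cnth c i.
Proof. by rewrite /cnth modnDr. Qed.

Lemma cnth_mod i : cnth c (i %% n) = cnth c i.
Proof. by rewrite /cnth modn_mod. Qed.

Lemma mem_cnth i : cnth c i \in c.
Proof. by rewrite /cnth mem_nth // ltn_pmod. Qed.

Lemma cnthP x : x \in c -> exists2 i, i < n & x = cnth c i.
Proof.
move=> xc; exists (index x c); first by rewrite index_mem.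
by rewrite /cnth modn_small ?index_mem // nth_index.
Qed.

Lemma cnthP_from b x : x \in c -> exists2 i, i < n & x = cnth c (b + i).
Proof.
case/cnthP=> j jn ->.
have bn := ltn_pmod b n0.
exists (if b %% n <= j then j - b %% n else j + n - b %% n).
  by move: (b %% n) bn => a ha; case: ifP => h; lia.
apply/esym; rewrite -cnth_mod -modnDml; move: (b %% n) bn => a ha.
case: ifP => h; first by rewrite subnKC // cnth_mod.
have -> : a + (j + n - a) = j + n by lia.
by rewrite cnth_mod cnth_addn.
Qed.

Lemma cnth_inj_mod i j : cnth c i = cnth c j -> i %% n = j %% n.
Proof. by move/eqP; rewrite /cnth nth_uniq ?ltn_pmod // => /eqP. Qed.

Lemma cnth_offset_inj i a b : a < n -> b < n -> cnth c (i + a) = cnth c (i + b) -> a = b.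
Proof. by move=> an bn /cnth_inj_mod/eqP; rewrite eqn_modDl !modn_small // => /eqP. Qed.

Lemma cnth_shift i j d : cnth c i = cnth c j -> cnth c (i + d) = cnth c (j + d).
Proof. by move/cnth_inj_mod=> e; rewrite /cnth -modnDml e modnDml. Qed.

Lemma cnth_inj3 i j : cnth c i = cnth c j -> i < 3 * n -> j < 3 * n ->
  i = j \/ i = j + n \/ j = i + n \/ i = j + 2 * n \/ j = i + 2 * n.
Proof. by move=> /cnth_inj_mod e hi hj; apply: modn_eq_lt3. Qed.

Lemma cnth_shift_neq i s : 0 < s < n -> cnth c (i + s) != cnth c i.
Proof. by move=> hs; apply/eqP; rewrite -[in RHS](addn0 i) => /cnth_offset_inj; lia. Qed.

Lemma next_cnth i : next c (cnth c i) = cnth c i.+1.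
Proof.
rewrite next_nth mem_cnth.
have ix : index (cnth c i) c = i %% n by rewrite /cnth index_uniq ?ltn_pmod.
case: c Uc n0 ix => [|y p] //= _ _ ix; rewrite ix /cnth /=.
have hi := ltn_pmod i (ltn0Sn (size p)).
move: (i %% (size p).+1) hi (modnDml i 1 (size p).+1) => a ha e.
rewrite -addn1 -e.
case: (ltnP a (size p)) => h.
  by rewrite modn_small ?addn1 /=; [apply: set_nth_default | lia].
have -> : a = size p by clear e; lia.
by rewrite addn1 modnn /= nth_default.
Qed.

Lemma prev_cnth i : prev c (cnth c i) = cnth c (i + n.-1).
Proof.
rewrite -[cnth c i](cnth_addn) -[i + n](_ : (i + n.-1).+1 = _); last by lia.
by rewrite -next_cnth prev_next.
Qed.

Lemma iter_next_cnth d i : iter d (next c) (cnth c i) = cnth c (i + d).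
Proof. by elim: d => [|d IH] /=; rewrite ?addn0 // IH next_cnth addnS. Qed.

Lemma iter_prev_cnth d i : d <= n -> iter d (prev c) (cnth c i) = cnth c (i + (n - d)).
Proof.
elim: d => [|d IH] /= h; first by rewrite subn0 cnth_addn.
rewrite IH; last lia.
by rewrite prev_cnth -[in RHS]cnth_addn; congr (cnth c _); lia.
Qed.

Lemma cnth_first_hit (p : pred V) a : has p c ->
  exists d, [/\ d < n, p (cnth c (a + d)) & forall m, m < d -> ~~ p (cnth c (a + m))].
Proof.
case/hasP=> x /(cnthP_from a) [i i_lt ->] px.
have ex : exists d, p (cnth c (a + d)) by exists i.
exists (ex_minn ex); case: ex_minnP => d pd dmin; split=> //.
  by apply: leq_ltn_trans i_lt; apply: dmin.
by move=> m; apply: contraTN => /dmin; rewrite leqNgt.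
Qed.

Lemma carcP i d z : z \in carc c i d -> exists2 t, t < d & z = cnth c (i + t.+1).
Proof.
elim: d i => [|d IH] i //=; rewrite inE => /orP[/eqP->|/IH[t td ->]].
  by exists 0 => //; rewrite addn1.
by exists t.+1 => //; rewrite addSnnS.
Qed.

Lemma nth_carc i d t : t < d -> nth x0 (carc c i d) t = cnth c (i + t.+1).
Proof.
elim: d i t => [|d IH] i [|t] //= h; first by rewrite addn1.
by rewrite IH // addSnnS.
Qed.

Lemma size_carc i d : size (carc c i d) = d.
Proof. by elim: d i => [|d IH] i //=; rewrite IH. Qed.

Lemma last_carc i d : last (cnth c i) (carc c i d) = cnth c (i + d).
Proof. by elim: d i => [|d IH] i /=; rewrite ?addn0 // IH addSnnS. Qed.

Lemma uniq_carc i d : d < n -> uniq (cnth c i :: carc c i d).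
Proof.
elim: d i => [|d IH] i h //.
rewrite [carc _ _ _.+1]/= cons_uniq IH ?(ltnW h) // andbT inE negb_or.
apply/andP; split; first by rewrite eq_sym -addn1 cnth_shift_neq //; lia.
apply/negP=> /carcP [t td] e.
have : cnth c (i + t.+2) != cnth c i by apply: cnth_shift_neq; lia.
by rewrite -addSnnS -e eqxx.
Qed.

Lemma internal_carc i d : internal (cnth c i) (carc c i d) = carc c i d.-1.
Proof.
rewrite /internal; case: d => [|d] //=.
by elim: d i => [|d IH] i //=; rewrite IH.
Qed.

Variable E : rel V.
Hypothesis cycE : cycle E c.

Lemma path_carc i d : path E (cnth c i) (carc c i d).
Proof.
elim: d i => [|d IH] i //=; rewrite IH andbT -next_cnth.
by apply: next_cycle cycE _; apply: mem_cnth.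
Qed.

Lemma dpath_carc i d : d < n -> dpath E (cnth c i) (cnth c (i + d)) (carc c i d).
Proof. by move=> dn; rewrite /dpath path_carc uniq_carc // last_carc eqxx. Qed.

Lemma cycle_split i d : 0 < d < n ->
  [/\ dpath E (cnth c i) (cnth c (i + d)) (carc c i d),
      dpath E (cnth c (i + d)) (cnth c i) (carc c (i + d) (n - d)) &
      disj (internal (cnth c i) (carc c i d))
           (internal (cnth c (i + d)) (carc c (i + d) (n - d)))].
Proof.
move=> hd; split; first by apply: dpath_carc; lia.
  have -> : cnth c i = cnth c (i + d + (n - d)) by rewrite -addnA subnKC ?cnth_addn //; lia.
  by apply: dpath_carc; lia.
rewrite !internal_carc; apply/hasPn=> z /carcP[s hs ->]; apply/negP=> /carcP[s' hs'].
rewrite -addnA => /cnth_offset_inj; lia.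
Qed.

End CyclicIndex.

Section DirectedPaths.
Variables (V : finType) (E : rel V).

Lemma dpath_cat u a w p q : dpath E u a p -> dpath E a w q ->
  {in q, forall z, z \notin u :: p} -> dpath E u w (p ++ q).
Proof.
case/and3P=> p1 u1 /eqP l1; case/and3P=> p2 u2 /eqP l2 hd.
have U : uniq (u :: p ++ q).
  move: u2; rewrite -cat_cons cat_uniq u1 cons_uniq => /andP[_ ->].
  by rewrite andbT; apply/hasPn.
by rewrite /dpath cat_path p1 l1 p2 U last_cat l1 l2 eqxx.
Qed.

Lemma mem_internal (u : V) p z : uniq (u :: p) ->
  (z \in internal u p) = [&& z \in p, z != u & z != last u p].
Proof.
case/lastP: p => [|q y] // U.
rewrite /internal belast_rcons /= last_rcons mem_rcons inE.
move: U; rewrite cons_uniq rcons_uniq mem_rcons inE negb_or.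
case/andP=> /andP[uy uq] /andP[hy _].
have [->|zy] := eqVneq z y; first by rewrite /= andbF (negbTE hy).
by rewrite /= andbT; have [->|zu] := eqVneq z u; rewrite ?(negbTE uq) ?andbT.
Qed.

Lemma internal_sub (u : V) p : {subset internal u p <= p}.
Proof.
case/lastP: p => [|q y] // z.
by rewrite /internal belast_rcons /= mem_rcons inE => ->; rewrite orbT.
Qed.

Lemma disjP (s t : seq V) : reflect {in s, forall z, z \notin t} (disj s t).
Proof. exact: hasPn. Qed.

Lemma disj_eq (s s' t t' : seq V) : s =i s' -> t =i t' -> disj s t = disj s' t'.
Proof. by move=> hs ht; rewrite /disj (eq_has_r hs) (eq_has (fun z => ht z)). Qed.

End DirectedPaths.

Section Reversal.
Variable V : finType.
Implicit Types (E : rel V) (c p P : seq V).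

Local Notation flip E := (fun x y => E y x).

Lemma dcycle_rev E c : dcycle E c -> dcycle (flip E) (rev c).
Proof. by rewrite /dcycle rev_uniq rev_cycle. Qed.

Lemma prefix_rot_rev P c r : prefix P (rot r c) -> exists r', prefix (rev P) (rot r' (rev c)).
Proof.
case/prefixP=> t ht.
have hx : rev t ++ rev P = rotr r (rev c) by rewrite -rev_cat -ht rev_rot.
exists (rot_add (rev c) (size (rev c) - r) (size (rev t))).
rewrite -rot_rot_add -/(rotr r (rev c)) -hx rot_size_cat.
exact: prefix_prefix.
Qed.

Lemma Qminus_rev k c P : uniq c -> Qminus k (rev c) (rev P) = Qplus k c P.
Proof.
move=> Uc; case: P => [|s p] //=.
rewrite lastI rev_rcons /=; apply: eq_map => d.
by apply: eq_iter; exact: prev_rev.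
Qed.

Lemma dpath_rev E (u w : V) p : dpath (flip E) u w p -> dpath E w u (rev (belast u p)).
Proof.
case/and3P=> hp hu /eqP hl.
have hw : w :: rev (belast u p) = rev (u :: p) by rewrite -rev_rcons -hl -lastI.
apply/and3P; split; first by rewrite -hl rev_path.
  by rewrite hw rev_uniq.
by rewrite -(last_cons u) hw rev_cons last_rcons.
Qed.

Lemma internal_rev (u w : V) p : uniq (u :: p) -> last u p = w ->
  internal w (rev (belast u p)) =i internal u p.
Proof.
move=> U hl z.
have hw : w :: rev (belast u p) = rev (u :: p) by rewrite -rev_rcons -hl -lastI.
have U' : uniq (w :: rev (belast u p)) by rewrite hw rev_uniq.
have hl' : last w (rev (belast u p)) = u by rewrite -(last_cons u) hw rev_cons last_rcons.
rewrite !mem_internal // hl' hl mem_rev.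
have : (z \in u :: p) = (z \in belast u p) || (z == w) by rewrite lastI mem_rcons inE hl orbC.
rewrite inE.
by case: (z == u); case: (z == w); rewrite ?orbF ?orbT ?andbF ?andbT //= => ->.
Qed.

Lemma has_subdiv_B_flip E k1 k2 k3 : has_subdiv_B (flip E) k1 k2 k3 -> has_subdiv_B E k1 k2 k3.
Proof.
case=> u [w [p1 [p2 [p3 [uw [D1 D2 D3] [s1 s2 s3] p12 [d12 d13 d23]]]]]].
have [l1 l2 l3] : [/\ last u p1 = w, last u p2 = w & last w p3 = u].
  by split; [case/and3P: D1 | case/and3P: D2 | case/and3P: D3] => _ _ /eqP.
have [U1 U2 U3] : [/\ uniq (u :: p1), uniq (u :: p2) & uniq (w :: p3)].
  by split; [case/and3P: D1 | case/and3P: D2 | case/and3P: D3].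
exists w, u, (rev (belast u p1)), (rev (belast u p2)), (rev (belast w p3)).
split; rewrite ?size_rev ?size_belast //; first by rewrite eq_sym.
- by split; apply: dpath_rev.
- apply: contra p12 => /eqP /(congr1 rev); rewrite !revK => hb.
  by apply/eqP; have /(congr1 behead) : u :: p1 = u :: p2 by rewrite lastI hb l1 -l2 -lastI.
- move: (internal_rev U1 l1) (internal_rev U2 l2) (internal_rev U3 l3) => I1 I2 I3.
  by rewrite (disj_eq I1 I2) (disj_eq I1 I3) (disj_eq I2 I3).
Qed.

Lemma k_suitable_rev E k m (C : 'I_m -> seq V) (P : 'I_m -> 'I_m -> seq V) :
  k_suitable E k C P ->
  k_suitable (flip E) k (fun i => rev (C i)) (fun i j => rev (P i j)).
Proof.
case=> hc hp; split=> [i|i j ij].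
  by have [/dcycle_rev ? ?] := hc i; rewrite size_rev.
case: (hp i j ij) => [hd|[P0 Pk Pm [r1 h1] [r2 h2]]]; [left|right].
  by move=> v; rewrite !mem_rev; exact: hd.
split; rewrite ?size_rev //.
- by rewrite -size_eq0 size_rev size_eq0.
- by move=> v; rewrite !mem_rev.
- exact: prefix_rot_rev h1.
- exact: prefix_rot_rev h2.
Qed.

End Reversal.

Section Segments.
Variables (V : finType) (x0 : V).
Implicit Types c P : seq V.
Local Notation cnth := (cnth x0).
Local Notation on_cycle_at := (on_cycle_at x0).

Lemma shared_nth c c' a a' P t : on_cycle_at c a P -> on_cycle_at c' a' P ->
  t < size P -> cnth c (a + t) = cnth c' (a' + t) /\ cnth c (a + t) \in P.
Proof. by move=> h h' tP; rewrite -h // -h' // mem_nth. Qed.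

Lemma shared_index c c' a a' P x : on_cycle_at c a P -> on_cycle_at c' a' P ->
  x \in P -> exists2 t, t < size P & x = cnth c (a + t) /\ x = cnth c' (a' + t).
Proof. by move=> h h' /(nthP x0)[t tP <-]; exists t; rewrite -?h -?h'. Qed.

Variable k : nat.

Lemma Qminus_sub c P : {subset P <= c} -> {subset Qminus k c P <= c}.
Proof.
case: P => [|s p] //= hs z /mapP [d _ ->].
have : s \in c by apply: hs; rewrite inE eqxx.
by elim: d => [|d IH] //= h; rewrite mem_prev IH.
Qed.

Lemma Qplus_sub c P : {subset P <= c} -> {subset Qplus k c P <= c}.
Proof.
case: P => [|s p] //= hs z /mapP [d _ ->].
have : last s p \in c by apply: hs; exact: mem_last.
by elim: d => [|d IH] //= h; rewrite mem_next IH.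
Qed.

Variable c : seq V.
Hypothesis Uc : uniq c.
Hypothesis n0 : 0 < size c.

Lemma mem_Qminus P b z : 3 * k <= size c -> P != [::] -> nth x0 P 0 = cnth c b ->
  z \in Qminus k c P <-> exists2 d, 0 < d <= 3 * k & z = cnth c (b + (size c - d)).
Proof.
case: P => [|s P] // hk _ /= ->; split.
  case/mapP=> d; rewrite mem_iota => /andP[d1 d2] ->.
  by exists d; rewrite ?iter_prev_cnth //; lia.
case=> d /andP[d0 dk] ->; apply/mapP; exists d; first by rewrite mem_iota; lia.
by rewrite iter_prev_cnth //; lia.
Qed.

Lemma Qplus_cnth P b z : on_cycle_at c b P -> z \in Qplus k c P ->
  exists2 d, 0 < d <= 3 * k & z = cnth c (b + (size P).-1 + d).
Proof.
case: P => [|s p] //= hP /mapP [d]; rewrite mem_iota => /andP[d1 d2] ->.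
exists d; first by lia.
by rewrite (last_nth x0) -[nth _ _ _]/(nth x0 (s :: p) (size p)) hP // iter_next_cnth.
Qed.

End Segments.

Lemma Qplus_Qminus_disj (V : finType) k (c P : seq V) z : 0 < k -> uniq c ->
  8 * k <= size c -> P != [::] -> size P <= k -> (exists r, prefix P (rot r c)) ->
  z \in Qplus k c P -> z \notin Qminus k c P.
Proof.
move=> k_gt0 Uc c_big P0 Pk [r hr] zQ.
have n0 : 0 < size c by lia.
have [b b_lt hP] := on_cycle_at_rot z n0 hr.
have [d /andP[d0 dk] ->] := Qplus_cnth Uc n0 hP zQ.
have P_gt0 : 0 < size P by rewrite lt0n size_eq0.
apply/negP=> /(mem_Qminus Uc n0 _ _ P0 (hP 0 P_gt0)).
rewrite addn0 => /(_ ltac:(lia)) [d' /andP[d'0 d'k]] /(cnth_inj3 Uc n0).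
lia.
Qed.

(* The paper's C_1, C_j, C_l are [c], [cj], [cl], and P_{1,j}, P_{1,l}, P_{j,l} are [Pj],
   [Pl], [Pjl], starting at positions [aj] of [c] and [bj] of [cj], [al] of [c] and [bl] of
   [cl], [r] of [cj] and [r'] of [cl] respectively. *)
Section ThreeCycles.
Variables (V : finType) (E : rel V) (k : nat) (v : V).
Variables (c cj cl Pj Pl Pjl : seq V) (aj bj al bl r r' : nat).
Local Notation atc := (cnth v c).
Local Notation atj := (cnth v cj).
Local Notation atl := (cnth v cl).
Hypotheses (k_gt0 : 0 < k) (Uc : uniq c) (Uj : uniq cj) (Ul : uniq cl).
Hypotheses (c_big : 8 * k <= size c) (cj_big : 8 * k <= size cj) (cl_big : 8 * k <= size cl).
Hypotheses (Pj_gt0 : 0 < size Pj) (Pl_gt0 : 0 < size Pl).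
Hypotheses (Pj_le : size Pj <= k) (Pl_le : size Pl <= k) (Pjl_le : size Pjl <= k).
Hypothesis mem_Pj : forall x, (x \in Pj) = (x \in c) && (x \in cj).
Hypothesis mem_Pl : forall x, (x \in Pl) = (x \in c) && (x \in cl).
Hypothesis mem_Pjl : forall x, (x \in Pjl) = (x \in cj) && (x \in cl).
Hypotheses (Pj_c : on_cycle_at v c aj Pj) (Pj_cj : on_cycle_at v cj bj Pj).
Hypotheses (Pl_c : on_cycle_at v c al Pl) (Pl_cl : on_cycle_at v cl bl Pl).
Hypotheses (Pjl_cj : on_cycle_at v cj r Pjl) (Pjl_cl : on_cycle_at v cl r' Pjl).
Hypotheses (aj_lt : aj < size c) (bj_lt : bj < size cj) (al_lt : al < size c).
Hypotheses (bl_lt : bl < size cl) (r_lt : r < size cj) (r'_lt : r' < size cl).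
Hypotheses (c_cyc : cycle E c) (cj_cyc : cycle E cj) (cl_cyc : cycle E cl).
Hypotheses (v_Ql : v \in Qminus k cl Pl) (v_cj : v \in cj) (v_Qj : v \notin Qminus k cj Pj).

Fact c_gt0 : 0 < size c. Proof. by apply: leq_trans c_big; nat_lia. Qed.
Fact cj_gt0 : 0 < size cj. Proof. by apply: leq_trans cj_big; nat_lia. Qed.
Fact cl_gt0 : 0 < size cl. Proof. by apply: leq_trans cl_big; nat_lia. Qed.

Lemma v_on_cl : exists2 e, 0 < e <= 3 * k & v = atl (bl + (size cl - e)).
Proof.
have Pl0 : Pl != [::] by rewrite -size_eq0 -lt0n.
have h0 : nth v Pl 0 = atl bl by rewrite Pl_cl // addn0.
by apply/(mem_Qminus Ul cl_gt0 _ _ Pl0 h0) => //; nat_lia.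
Qed.

Lemma first_Pl_vertex : exists dC ty, [/\ dC < size c, ty < size Pl,
  atc (aj + dC) = atl (bl + ty) & forall m, m < dC -> atc (aj + m) \notin cl].
Proof.
have [h _] := shared_nth Pl_cl Pl_c Pl_gt0; rewrite !addn0 in h.
have c_cl : has (mem cl) c.
  by apply/hasP; exists (atc al); rewrite ?(mem_cnth _ c_gt0) // -h; exact: mem_cnth cl_gt0 _.
have [dC [dC_lt hit before]] := cnth_first_hit v Uc c_gt0 aj c_cl.
have /(shared_index Pl_cl Pl_c)[ty ty_lt [y_atl _]] : atc (aj + dC) \in Pl.
  by rewrite mem_Pl (mem_cnth _ c_gt0).
by exists dC, ty; split.
Qed.

(* [v] is [e] steps before s_{1,l} on C_l, [pv] steps after s_{1,j} on C_j, and at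
   position [t0] of P_{j,l}; the end x of P_{j,l} is then [dx] steps after s_{1,j} on C_j
   and at index [ix] of C_l. *)
Section Positions.
Variables (e pv t0 : nat).
Hypotheses (e_bd : 0 < e <= 3 * k) (v_atl : v = atl (bl + (size cl - e))).
Hypotheses (pv_lt : pv < size cj) (v_atj : v = atj (bj + pv)).
Hypotheses (t0_lt : t0 < size Pjl) (v_atj_r : v = atj (r + t0)) (v_atl_r : v = atl (r' + t0)).

Lemma v_notin_c : v \notin c.
Proof.
apply/negP=> vc.
have vPl : v \in Pl by rewrite mem_Pl vc [X in X \in _]v_atl (mem_cnth _ cl_gt0).
have [t t_lt [+ _]] := shared_index Pl_cl Pl_c vPl.
rewrite [X in X = _]v_atl => /(cnth_inj3 Ul cl_gt0).
nat_lia.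
Qed.

Lemma pv_bounds : size Pj <= pv /\ pv + 3 * k < size cj.
Proof.
split; rewrite leqNgt; apply/negP=> h.
  have [_] := shared_nth Pj_cj Pj_c h.
  by rewrite -v_atj mem_Pj (negbTE v_notin_c).
move/negP: v_Qj; apply.
have Pj0 : Pj != [::] by rewrite -size_eq0 -lt0n.
have h0 : nth v Pj 0 = atj bj by rewrite Pj_cj // addn0.
apply/(mem_Qminus Uj cj_gt0 _ _ Pj0 h0); first by nat_lia.
exists (size cj - pv); first by nat_lia.
by rewrite [X in X = _]v_atj; congr (cnth v cj _); nat_lia.
Qed.


Local Notation dx := (pv + (size Pjl - 1 - t0)).
Local Notation ix := (bl + (size cl - e) + (size Pjl - 1 - t0)).

(* Otherwise P_{j,l} would contain s_{1,l}, a vertex of C_1 on C_j far from P_{1,j}. *)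
Lemma exit_before_Pl : size Pjl - 1 - t0 < e.
Proof.
rewrite ltnNge; apply/negP=> h.
have [Pj_pv pv_3k] := pv_bounds.
have sl : atl (r' + (t0 + e)) = atl bl.
  have : atl (r' + t0) = atl (bl + (size cl - e)) by rewrite -v_atl -v_atl_r.
  move/(cnth_shift Ul cl_gt0 e); rewrite addnA => ->.
  by rewrite -[RHS](cnth_addn v cl); congr (cnth v cl _); nat_lia.
have sj : atj (r + (t0 + e)) = atj (bj + (pv + e)).
  have : atj (r + t0) = atj (bj + pv) by rewrite -v_atj -v_atj_r.
  by move/(cnth_shift Uj cj_gt0 e); rewrite !addnA.
have [h1 _] := shared_nth Pjl_cj Pjl_cl (ltac:(nat_lia) : t0 + e < size Pjl).
have [h2 _] := shared_nth Pl_cl Pl_c Pl_gt0; rewrite !addn0 in h2.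
have /(shared_index Pj_cj Pj_c)[t t_lt [+ _]] : atj (bj + (pv + e)) \in Pj.
  by rewrite mem_Pj (mem_cnth _ cj_gt0) andbT -sj h1 sl h2 (mem_cnth _ c_gt0).
move/(cnth_inj3 Uj cj_gt0); nat_lia.
Qed.

Lemma exit_on_cj : atj (bj + dx) = atj (r + (size Pjl).-1).
Proof.
have : atj (bj + pv) = atj (r + t0) by rewrite -v_atj -v_atj_r.
move/(cnth_shift Uj cj_gt0 (size Pjl - 1 - t0)); rewrite addnA => ->.
by congr (cnth v cj _); nat_lia.
Qed.

Lemma exit_on_cl : atl ix = atl (r' + (size Pjl).-1).
Proof.
have : atl (bl + (size cl - e)) = atl (r' + t0) by rewrite -v_atl -v_atl_r.
move/(cnth_shift Ul cl_gt0 (size Pjl - 1 - t0)) => ->.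
by congr (cnth v cl _); nat_lia.
Qed.

Lemma exit_shared : atj (bj + dx) = atl ix.
Proof.
rewrite exit_on_cj exit_on_cl.
by have [] := shared_nth Pjl_cj Pjl_cl (ltac:(nat_lia) : (size Pjl).-1 < size Pjl).
Qed.

Lemma exit_notin_c : atj (bj + dx) \notin c.
Proof.
apply/negP=> h; have [Pj_pv pv_3k] := pv_bounds.
have /(shared_index Pj_cj Pj_c)[t t_lt [+ _]] : atj (bj + dx) \in Pj.
  by rewrite mem_Pj h (mem_cnth _ cj_gt0).
move/(cnth_inj3 Uj cj_gt0); nat_lia.
Qed.

Lemma exit_arc_avoids_cl s : 0 < s < size cj - dx -> atj (bj + dx + s) \notin cl.
Proof.
move=> hs; apply/negP=> s_cl.
have /(shared_index Pjl_cj Pjl_cl)[t t_lt [h1 _]] : atj (bj + dx + s) \in Pjl.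
  by rewrite mem_Pjl s_cl (mem_cnth _ cj_gt0).
have wrap : s + (size Pjl - 1 - t) = size cj.
  by move: (cnth_inj3 Uj cj_gt0 exit_on_cj) (cnth_inj3 Uj cj_gt0 h1); nat_lia.
have sj_Pjl : atj bj = atj (r + (size Pjl - 1 - dx)).
  move/(cnth_shift Uj cj_gt0 (size cj - dx)): exit_on_cj.
  have -> : bj + dx + (size cj - dx) = bj + size cj by nat_lia.
  rewrite cnth_addn => ->; rewrite -[RHS]cnth_addn; congr (cnth v cj _); nat_lia.
have [h3 _] := shared_nth Pjl_cj Pjl_cl (ltac:(nat_lia) : size Pjl - 1 - dx < size Pjl).
have [sj_c _] := shared_nth Pj_cj Pj_c Pj_gt0; rewrite !addn0 in sj_c.
have /(shared_index Pl_cl Pl_c)[t3 t3_lt [h4 _]] : atj bj \in Pl.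
  by rewrite mem_Pl {1}sj_c (mem_cnth _ c_gt0) sj_Pjl h3 (mem_cnth _ cl_gt0).
have : atl (r' + (size Pjl - 1 - dx)) = atl (bl + t3) by rewrite -h3 -sj_Pjl.
move/(cnth_shift Ul cl_gt0 dx).
have -> : r' + (size Pjl - 1 - dx) + dx = r' + (size Pjl).-1 by nat_lia.
rewrite -exit_on_cl => /(cnth_inj3 Ul cl_gt0); nat_lia.
Qed.

(* [y = atc (aj + dC)] is the first vertex of C_1 on C_l after s_{1,j}.  The path [p1]
   follows C_j from x to s_{1,j} and then C_1 to y; the arcs of C_l from x to y and back
   are the other two paths of the subdivision. *)
Section ThreePaths.
Variables (dC ty : nat).
Hypotheses (dC_lt : dC < size c) (ty_lt : ty < size Pl).
Hypothesis y_atl : atc (aj + dC) = atl (bl + ty).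
Hypothesis before_y : forall m, m < dC -> atc (aj + m) \notin cl.

Local Notation d2 := (bl + size cl + ty - ix).
Local Notation p1 := (carc v cj (bj + dx) (size cj - dx) ++ carc v c aj dC).

Lemma y_on_cl : atc (aj + dC) = atl (ix + d2).
Proof.
have s_lt_e := exit_before_Pl; rewrite y_atl -[LHS](cnth_addn v cl).
by congr (cnth v cl _); nat_lia.
Qed.

Lemma dpath_p1 : dpath E (atj (bj + dx)) (atc (aj + dC)) p1.
Proof.
have [Pj_pv pv_3k] := pv_bounds.
have [sj_c _] := shared_nth Pj_cj Pj_c Pj_gt0; rewrite !addn0 in sj_c.
apply: (@dpath_cat _ _ _ (atc aj)).
- have -> : atc aj = atj (bj + dx + (size cj - dx)).
    by rewrite -sj_c -[LHS](cnth_addn v cj); congr (cnth v cj _); nat_lia.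
  by apply: (dpath_carc v Uj cj_gt0 cj_cyc); nat_lia.
- exact: (dpath_carc v Uc c_gt0 c_cyc).
move=> z /carcP[m m_lt ->]; apply/negP=> hz.
have [s s_le hs] : exists2 s, s <= size cj - dx & atc (aj + m.+1) = atj (bj + dx + s).
  move: hz; rewrite inE => /orP[/eqP ->|/carcP[s s_lt ->]]; first by exists 0; rewrite ?addn0.
  by exists s.+1; rewrite // addnA.
have /(shared_index Pj_cj Pj_c)[t t_lt [h1 h2]] : atc (aj + m.+1) \in Pj.
  by rewrite mem_Pj (mem_cnth _ c_gt0) hs (mem_cnth _ cj_gt0).
move: (cnth_inj3 Uc c_gt0 h2); rewrite hs in h1; move: (cnth_inj3 Uj cj_gt0 h1).
have s_lt_e := exit_before_Pl; nat_lia.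
Qed.

Lemma internal_p1_avoids_cl : {in internal (atj (bj + dx)) p1, forall z, z \notin cl}.
Proof.
have [Pj_pv pv_3k] := pv_bounds; have s_lt_e := exit_before_Pl.
have [sj_c _] := shared_nth Pj_cj Pj_c Pj_gt0; rewrite !addn0 in sj_c.
have /and3P[_ U1 /eqP L1] := dpath_p1.
move=> z; rewrite mem_internal // L1 mem_cat => /and3P[+ _].
case/orP=> /carcP[s s_lt ->] z_y.
  have [s_lt'|s_ge] := ltnP s.+1 (size cj - dx).
    by apply: exit_arc_avoids_cl; nat_lia.
  have e0 : atj (bj + dx + s.+1) = atc (aj + 0).
    by rewrite addn0 -sj_c -[RHS](cnth_addn v cj); congr (cnth v cj _); nat_lia.
  rewrite e0; have [dC0|dC_gt0] := posnP dC; last by apply: before_y.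
  by move: z_y; rewrite e0 dC0 eqxx.
have [m_lt|m_ge] := ltnP s.+1 dC; first by apply: before_y.
have sdC : s.+1 = dC by nat_lia.
by move: z_y; rewrite sdC eqxx.
Qed.

Lemma three_paths_subdiv : has_subdiv_B E k 1 k.
Proof.
have [Pj_pv pv_3k] := pv_bounds; have s_lt_e := exit_before_Pl.
have d2_bd : 0 < d2 < size cl by nat_lia.
have [D2 D3 d23] := cycle_split v Ul cl_gt0 cl_cyc ix d2_bd.
rewrite -y_on_cl -exit_shared in D2 D3 d23.
exists (atj (bj + dx)), (atc (aj + dC)), p1, (carc v cl ix d2).
exists (carc v cl (ix + d2) (size cl - d2)); split=> //.
- by apply: contraNneq exit_notin_c => ->; apply: mem_cnth c_gt0 _.
- by split=> //; apply: dpath_p1.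
- by rewrite size_cat !size_carc; split; nat_lia.
- apply/eqP=> /(congr1 (fun p => nth v p 0)).
  rewrite nth_cat size_carc ifT; last by nat_lia.
  rewrite !nth_carc; [|nat_lia|nat_lia] => h.
  have := exit_arc_avoids_cl (ltac:(nat_lia) : 0 < 1 < size cj - dx).
  by rewrite h (mem_cnth _ cl_gt0).
have p1_cl u i d :
    {in internal (atj (bj + dx)) p1, forall z, z \notin internal u (carc v cl i d)}.
  move=> z /internal_p1_avoids_cl; apply: contra => /internal_sub /carcP[s _ ->].
  exact: mem_cnth cl_gt0 _.
by split=> //; apply/disjP; apply: p1_cl.
Qed.

End ThreePaths.

End Positions.

Lemma three_cycles_subdiv : has_subdiv_B E k 1 k.
Proof.
have [e e_bd v_atl] := v_on_cl.
have [pv pv_lt v_atj] := cnthP_from v Uj cj_gt0 bj v_cj.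
have /(shared_index Pjl_cj Pjl_cl)[t0 t0_lt [v_atj_r v_atl_r]] : v \in Pjl.
  by rewrite mem_Pjl v_cj [X in X \in _]v_atl (mem_cnth _ cl_gt0).
have [dC [ty [dC_lt ty_lt y_atl before_y]]] := first_Pl_vertex.
exact: (three_paths_subdiv e_bd v_atl pv_lt v_atj t0_lt v_atj_r v_atl_r
          dC_lt ty_lt y_atl before_y).
Qed.

End ThreeCycles.

Lemma k_suitable_meets (V : finType) (E : rel V) k m (C : 'I_m -> seq V) P i j :
  k_suitable E k C P -> j != i -> meets (C i) (C j) ->
  [/\ P i j != [::], size (P i j) <= k,
      forall v, (v \in P i j) = (v \in C i) && (v \in C j),
      exists r, prefix (P i j) (rot r (C i)) &
      exists r, prefix (P i j) (rot r (C j))].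
Proof.
case=> _ hP; rewrite eq_sym => ij /hasP[x xj xi]; case: (hP i j ij) => // disj_ij.
by have := disj_ij x xi; rewrite xj.
Qed.

Lemma Qminus_in_other_cycle (V : finType) (E : rel V) k m (C : 'I_m -> seq V) P i1 j l v :
  0 < k -> ~ has_subdiv_B E k 1 k -> k_suitable E k C P ->
  j != i1 -> l != i1 -> meets (C i1) (C j) -> meets (C i1) (C l) ->
  v \in Qminus k (C l) (P i1 l) -> v \in C j -> v \in Qminus k (C j) (P i1 j).
Proof.
move=> k_gt0 noB suit j1 l1 mj ml vQl vj.
have [<- //|lj] := eqVneq l j.
apply: contraT => vQj; exfalso; apply: noB.
have [Pj0 Pj_le mem_Pj [rj1 hj1] [rj2 hj2]] := k_suitable_meets suit j1 mj.
have [Pl0 Pl_le mem_Pl [rl1 hl1] [rl2 hl2]] := k_suitable_meets suit l1 ml.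
have vl : v \in C l by apply: Qminus_sub vQl => x; rewrite mem_Pl => /andP[].
have mjl : meets (C j) (C l) by apply/hasP; exists v.
have [_ Pjl_le mem_Pjl [r1 h1] [r2 h2]] := k_suitable_meets suit lj mjl.
have [/andP[Uc c_cyc] c_big] := suit.1 i1.
have [/andP[Uj cj_cyc] cj_big] := suit.1 j.
have [/andP[Ul cl_cyc] cl_big] := suit.1 l.
have [c_gt0 cj_gt0 cl_gt0] : [/\ 0 < size (C i1), 0 < size (C j) & 0 < size (C l)].
  by split; nat_lia.
have [aj aj_lt Pj_c] := on_cycle_at_rot v c_gt0 hj1.
have [bj bj_lt Pj_cj] := on_cycle_at_rot v cj_gt0 hj2.
have [al al_lt Pl_c] := on_cycle_at_rot v c_gt0 hl1.
have [bl bl_lt Pl_cl] := on_cycle_at_rot v cl_gt0 hl2.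
have [r r_lt Pjl_cj] := on_cycle_at_rot v cj_gt0 h1.
have [r' r'_lt Pjl_cl] := on_cycle_at_rot v cl_gt0 h2.
have [Pj_gt0 Pl_gt0] : 0 < size (P i1 j) /\ 0 < size (P i1 l) by rewrite !lt0n !size_eq0.
exact: (three_cycles_subdiv k_gt0 Uc Uj Ul c_big cj_big cl_big Pj_gt0 Pl_gt0
          Pj_le Pl_le Pjl_le mem_Pj mem_Pl mem_Pjl Pj_c Pj_cj Pl_c Pl_cl Pjl_cj Pjl_cl
          aj_lt bj_lt al_lt bl_lt r_lt r'_lt c_cyc cj_cyc cl_cyc vQl vj vQj).
Qed.

Lemma Qplus_in_other_cycle (V : finType) (E : rel V) k m (C : 'I_m -> seq V) P i1 j l v :
  0 < k -> ~ has_subdiv_B E k 1 k -> k_suitable E k C P ->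
  j != i1 -> l != i1 -> meets (C i1) (C j) -> meets (C i1) (C l) ->
  v \in Qplus k (C l) (P i1 l) -> v \in C j -> v \in Qplus k (C j) (P i1 j).
Proof.
move=> k_gt0 noB suit j1 l1 mj ml.
have U i : uniq (C i) by have [/andP[]] := suit.1 i.
have meets_rev i i' : meets (rev (C i)) (rev (C i')) = meets (C i) (C i').
  by rewrite /meets has_rev (eq_has (mem_rev (C i))).
rewrite -(Qminus_rev _ _ (U l)) -(Qminus_rev _ _ (U j)) -(mem_rev (C j)).
apply: (Qminus_in_other_cycle (E := fun x y => E y x) (C := fun i => rev (C i))
          (P := fun i j => rev (P i j))) => //.
- by move/has_subdiv_B_flip.
- exact: k_suitable_rev.
- by rewrite meets_rev.
- by rewrite meets_rev.
Qed.

Theorem mainTheorem13 (V : finType) (E : rel V) (k m : nat)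
    (C : 'I_m -> seq V) (P : 'I_m -> 'I_m -> seq V) (i1 : 'I_m) :
  0 < k ->
  ~ has_subdiv_B E k 1 k ->
  k_suitable E k C P ->
  (forall v, ~ (inIplus k C P i1 v /\ inIminus k C P i1 v)) /\
  (forall j, j != i1 -> meets (C i1) (C j) ->
     (forall v, (inIminus k C P i1 v /\ v \in C j) <-> v \in Qminus k (C j) (P i1 j)) /\
     (forall v, (inIplus k C P i1 v /\ v \in C j) <-> v \in Qplus k (C j) (P i1 j))).
Proof.
move=> k_gt0 noB suit.
have Qm j l v := @Qminus_in_other_cycle _ _ _ _ C P i1 j l v k_gt0 noB suit.
have Qp j l v := @Qplus_in_other_cycle _ _ _ _ C P i1 j l v k_gt0 noB suit.
have sub j : j != i1 -> meets (C i1) (C j) -> {subset P i1 j <= C j}.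
  by move=> j1 /(k_suitable_meets suit j1)[_ _ mem_P _ _] x; rewrite mem_P => /andP[].
split=> [v [[j [j1 mj vQp]] [l [l1 ml vQm]]] | j j1 mj].
  have [P0 P_le _ _ hP] := k_suitable_meets suit j1 mj.
  have /andP[Uj _] := (suit.1 j).1.
  have := Qplus_Qminus_disj k_gt0 Uj (suit.1 j).2 P0 P_le hP vQp.
  by rewrite (Qm _ _ _ j1 l1 mj ml vQm) // (Qplus_sub (sub j j1 mj) vQp).
split=> v; split=> [[[l [l1 ml vQ]] vj] | vQ].
- exact: Qm _ _ _ j1 l1 mj ml vQ vj.
- by split; [exists j | apply: Qminus_sub vQ; apply: sub].
- exact: Qp _ _ _ j1 l1 mj ml vQ vj.
- by split; [exists j | apply: Qplus_sub vQ; apply: sub].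
Qed.
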